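(* Let $G=(V,E)$ be a finite simple graph, let $A$ be a nonzero commutative ring with unity, let $R=A[V]$, and let $S\subseteq V$. Then $$\mathcal{N}_S(G)=\bigcap_{D}(D)R=\bigcap_{D\ \mathrm{minimal}}(D)R,$$ where the first intersection is over all $S$-TD-sets $D$ of $G$ and the second over all minimal $S$-TD-sets of $G$. Moreover, the second decomposition is irredundant.
   Context: For $v\in V$, $N(v)=\{u\in V: uv\in E\}$, and for $D\subseteq V$, $N(D)=\bigcup_{v\in D}N(v)$. For $U\subseteq V$, $X_U=\prod_{v\in U}v\in A[V]$. The $S$-open neighborhood ideal is $\mathcal{N}_S(G)=(X_{N(v)}\mid v\in S)R$. A set $D\subseteq V$ is an $S$-TD-set of $G$ if $N(D)\supseteq S$; it is minimal if no proper subset of $D$ is an $S$-TD-set. $(D)R$ is the ideal generated by the variables in $D$. *)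

From HB Require Import structures.
From mathcomp Require Import all_boot all_algebra.
From mathcomp Require Export mpoly.
Set Implicit Arguments. Unset Strict Implicit. Unset Printing Implicit Defensive.
Import GRing.Theory.
Local Open Scope ring_scope.

Definition simple_graph (n : nat) (e : rel 'I_n) : Prop :=
  ssrbool.symmetric e /\ irreflexive e.

Definition nbhd (n : nat) (e : rel 'I_n) (v : 'I_n) : {set 'I_n} :=
  [set u | e u v].
Definition nbhdS (n : nat) (e : rel 'I_n) (D : {set 'I_n}) : {set 'I_n} :=
  \bigcup_(v in D) nbhd e v.

Definition XU (A : comNzRingType) (n : nat) (U : {set 'I_n}) : {mpoly A[n]} :=
  \prod_(v in U) 'X_v.

(* Ideals are represented as predicates on the ring.  The ideal generated
   by the finite family (f i)_{i in P}:  x = sum_{i in P} c_i f_i. *)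
Definition gen_ideal (R : comNzRingType) (I : finType) (P : pred I) (f : I -> R)
  : R -> Prop :=
  fun x => exists c : I -> R, x = \sum_(i | P i) c i * f i.

Definition nbhd_ideal (A : comNzRingType) (n : nat) (e : rel 'I_n)
  (S : {set 'I_n}) : {mpoly A[n]} -> Prop :=
  gen_ideal (mem S) (fun v => XU A (nbhd e v)).

Definition var_ideal (A : comNzRingType) (n : nat) (D : {set 'I_n})
  : {mpoly A[n]} -> Prop :=
  gen_ideal (mem D) (fun v => 'X_v).

Definition STD (n : nat) (e : rel 'I_n) (S D : {set 'I_n}) : bool :=
  S \subset nbhdS e D.
Definition minSTD (n : nat) (e : rel 'I_n) (S D : {set 'I_n}) : bool :=
  STD e S D && [forall D' : {set 'I_n}, (D' \proper D) ==> ~~ STD e S D'].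

Definition ideal_eq (R : Type) (I J : R -> Prop) : Prop := forall x, I x <-> J x.

Arguments XU A {n} U.
Arguments nbhd_ideal A {n} e S _.
Arguments var_ideal A {n} D _.

(* (X_{U_i} | i in P) is a monomial ideal, so membership can be tested on
   monomials: X^m lies in it iff supp m contains some U_i.  Otherwise the zero
   set Z of m meets every U_i and X^m is not in (Z)R.  Hence (X_{U_i} | i in P)
   is the intersection of (D)R over the sets D meeting every U_i.  For
   U_v = N(v), v in S, and a symmetric adjacency relation these D are the
   S-TD-sets, each of which contains a minimal one.  For a minimal D0 the
   monomial X_{V \ D0} lies in (D)R for every other minimal D, since D is not
   contained in D0, but not in (D0)R. *)
From mathcomp Require Import all_boot all_algebra.
From mathcomp Require Import mpoly.
Local Open Scope ring_scope.
Import GRing.Theory.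

Section GenIdeal.
Variables (R : comNzRingType) (I : finType) (P : pred I) (f : I -> R).

Lemma gen_ideal0 : gen_ideal P f 0.
Proof. by exists (fun _ => 0); rewrite big1 // => i _; rewrite mul0r. Qed.

Lemma gen_idealD x y : gen_ideal P f x -> gen_ideal P f y -> gen_ideal P f (x + y).
Proof.
move=> [c1 ->] [c2 ->]; exists (fun i => c1 i + c2 i).
by rewrite -big_split /=; apply: eq_bigr => i _; rewrite mulrDl.
Qed.

Lemma gen_idealMl r x : gen_ideal P f x -> gen_ideal P f (r * x).
Proof.
move=> [c ->]; exists (fun i => r * c i).
by rewrite mulr_sumr; apply: eq_bigr => i _; rewrite mulrA.
Qed.

Lemma gen_ideal_gen i : P i -> gen_ideal P f (f i).
Proof.
move=> Pi; exists (fun j => (j == i)%:R).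
rewrite (bigD1 i) //= eqxx mul1r big1 ?addr0 // => j /andP [_ /negbTE ->].
by rewrite mul0r.
Qed.

Lemma gen_ideal_sum (J : Type) (r : seq J) (Q : pred J) (g : J -> R) :
  (forall j, Q j -> gen_ideal P f (g j)) ->
  gen_ideal P f (\sum_(j <- r | Q j) g j).
Proof.
by move=> Hg; apply: big_ind => //; [exact: gen_ideal0 | exact: gen_idealD].
Qed.

Lemma gen_ideal_sub (J : finType) (Q : pred J) (g : J -> R) x :
  (forall j, Q j -> gen_ideal P f (g j)) -> gen_ideal Q g x -> gen_ideal P f x.
Proof. by move=> Hg [c ->]; apply: gen_ideal_sum => j Qj; apply/gen_idealMl/Hg. Qed.

End GenIdeal.

Definition hitting_set {I : finType} {n : nat} (P : pred I)
    (F : I -> {set 'I_n}) (D : {set 'I_n}) : bool :=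
  [forall (i | P i), ~~ [disjoint F i & D]].

Section MonomialIdeals.
Context {A : comNzRingType} {n : nat}.
Implicit Types (D U : {set 'I_n}) (m : 'X_{1..n}) (p x : {mpoly A[n]}).

Lemma var_ideal_subset D D' x :
  D \subset D' -> var_ideal A D x -> var_ideal A D' x.
Proof.
by move=> /subsetP sDD'; apply: gen_ideal_sub => i /sDD' iD'; apply: gen_ideal_gen.
Qed.

Lemma mcoeffMX_eq0 p (i : 'I_n) m : m i = 0%N -> (p * 'X_i)@_m = 0.
Proof.
move=> mi0; apply/eqP; rewrite mcoeff_eq0; apply/negP => msupp_m.
have := perm_mem (msuppMX p U_(i)%MM) m; rewrite msupp_m => /esym /mapP [m' _ mE].
by move: mi0; rewrite mE mnmDE mnm1E eqxx.
Qed.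

Lemma var_ideal_mcoeff_eq0 D x m :
  var_ideal A D x -> {in D, forall i, m i = 0%N} -> x@_m = 0.
Proof.
move=> [c ->] m0; rewrite raddf_sum; apply: big1 => i iD.
exact/mcoeffMX_eq0/m0.
Qed.

Lemma XU_var_ideal U D : ~~ [disjoint U & D] -> var_ideal A D (XU A U).
Proof.
rewrite -setI_eq0 => /set0Pn [u]; rewrite inE => /andP [uU uD].
by rewrite /XU (big_setD1 u uU) /= mulrC; apply/gen_idealMl/gen_ideal_gen.
Qed.

Lemma XU_dvd_mpolyX U m :
  {in U, forall u, 0 < m u}%N -> exists r, 'X_[m] = r * XU A U.
Proof.
move=> m_pos; rewrite mpolyXE_id (bigID (mem U)) /=.
rewrite (eq_bigr (fun i => 'X_i ^+ (m i).-1 * 'X_i)); last first.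
  by move=> i iU; rewrite -exprSr prednK // m_pos.
rewrite big_split /= mulrAC.
by exists ((\prod_(i in U) 'X_i ^+ (m i).-1) * \prod_(i | i \notin U) 'X_i ^+ m i).
Qed.

Lemma XU_setC_notin_var_ideal D : ~ var_ideal A D (XU A (~: D)).
Proof.
pose m : 'X_{1..n} := [multinom (i \notin D : nat) | i < n].
have XU_mpolyX : XU A (~: D) = 'X_[m].
  rewrite mpolyXE_id /XU big_mkcond /=; apply: eq_bigr => i _.
  by rewrite mnmE in_setC; case: (i \in D); rewrite ?expr0 ?expr1.
rewrite XU_mpolyX => /(var_ideal_mcoeff_eq0 _ _ m) m_coeff.
have : 'X_[m]@_m = 0 :> A by apply: m_coeff => i iD; rewrite mnmE iD.
by rewrite mcoeffX eqxx => /eqP; rewrite oner_eq0.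
Qed.

Variables (I : finType) (P : pred I) (F : I -> {set 'I_n}).

Lemma gen_ideal_XU_var_ideal D x :
  hitting_set P F D -> gen_ideal P (fun i => XU A (F i)) x -> var_ideal A D x.
Proof.
move=> /forall_inP hitD; apply: gen_ideal_sub => i Pi.
exact/XU_var_ideal/hitD.
Qed.

Lemma var_ideals_gen_ideal_XU x :
  (forall D, hitting_set P F D -> var_ideal A D x) ->
  gen_ideal P (fun i => XU A (F i)) x.
Proof.
move=> x_var; rewrite (mpolyE x); apply: gen_ideal_sum => m _.
have [zero_hit | ] := boolP (hitting_set P F [set u | m u == 0%N]).
  rewrite (var_ideal_mcoeff_eq0 _ _ m (x_var _ zero_hit)) ?scale0r.
    exact: gen_ideal0.
  by move=> i; rewrite inE => /eqP.
move=> /forall_inPn [i Pi]; rewrite negbK => Fi_supp.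
rewrite -mul_mpolyC; apply: gen_idealMl.
have [|r ->] := XU_dvd_mpolyX (F i) m.
  by move=> u /(disjointFr Fi_supp)/negbT; rewrite inE lt0n.
exact/gen_idealMl/gen_ideal_gen.
Qed.

End MonomialIdeals.

Section TotalDominatingSets.
Context {n : nat} (e : rel 'I_n) (S : {set 'I_n}).

Lemma STD_hitting_set D :
  ssrbool.symmetric e -> STD e S D = hitting_set (mem S) (nbhd e) D.
Proof.
move=> esym; apply/subsetP/forall_inP => [SD v /SD | hitD v /hitD].
  move=> /bigcupP [u uD]; rewrite inE => evu.
  by apply: contraL uD => /disjointFr ->; rewrite // inE esym.
rewrite -setI_eq0 => /set0Pn [u]; rewrite !inE => /andP [euv uD].
by apply/bigcupP; exists u; rewrite // inE esym.
Qed.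

Lemma minSTD_minset D : minSTD e S D = minset (STD e S) D.
Proof.
apply/andP/minsetP => [[STD_D /forallP minD] | [STD_D minD]]; split => //.
  move=> B STD_B sBD; apply/eqP; apply: contraT => nBD.
  by have := minD B; rewrite properEneq nBD sBD STD_B.
apply/forallP => B; apply/implyP; rewrite properEneq => /andP [nBD sBD].
by apply: contra nBD => STD_B; rewrite (minD B STD_B sBD).
Qed.

Hypothesis esym : ssrbool.symmetric e.

Lemma nbhd_ideal_var_ideal (A : comNzRingType) D x :
  STD e S D -> nbhd_ideal A e S x -> var_ideal A D x.
Proof. by rewrite STD_hitting_set //; apply: gen_ideal_XU_var_ideal. Qed.

Lemma var_ideals_nbhd_ideal (A : comNzRingType) x :
  (forall D, STD e S D -> var_ideal A D x) -> nbhd_ideal A e S x.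
Proof.
move=> x_var; apply: var_ideals_gen_ideal_XU => D.
by rewrite -STD_hitting_set // => /x_var.
Qed.

End TotalDominatingSets.

Theorem theorem2p6 (A : comNzRingType) (n : nat) (e : rel 'I_n)
  (S : {set 'I_n}) :
  simple_graph e ->
  (* N_S(G) = intersection of (D)R over all S-TD-sets D *)
  ideal_eq (nbhd_ideal A e S)
    (fun x => forall D : {set 'I_n}, STD e S D -> var_ideal A D x) /\
  (* N_S(G) = intersection of (D)R over all minimal S-TD-sets D *)
  ideal_eq (nbhd_ideal A e S)
    (fun x => forall D : {set 'I_n}, minSTD e S D -> var_ideal A D x) /\
  (* irredundance: omitting any minimal S-TD-set changes the intersection *)
  (forall D0 : {set 'I_n}, minSTD e S D0 ->
     ~ ideal_eq (nbhd_ideal A e S)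
         (fun x => forall D : {set 'I_n}, minSTD e S D -> D != D0 ->
                     var_ideal A D x)).
Proof.
move=> [esym _].
have STD_decomp : ideal_eq (nbhd_ideal A e S)
    (fun x => forall D, STD e S D -> var_ideal A D x).
  move=> x; split=> [x_nbhd D STD_D | ]; last exact: var_ideals_nbhd_ideal.
  exact: nbhd_ideal_var_ideal x_nbhd.
split=> //; split=> [x | D0 minD0 decomp].
  rewrite STD_decomp; split=> x_var D; rewrite ?minSTD_minset.
    by move=> /minsetP [STD_D _]; apply: x_var.
  move=> /minset_exists [D' minD' sD'D]; apply: var_ideal_subset sD'D _.
  by apply: x_var; rewrite minSTD_minset.
move: minD0; rewrite minSTD_minset => /minsetP [STD_D0 minD0].
apply: (XU_setC_notin_var_ideal (A := A) D0).
apply: nbhd_ideal_var_ideal STD_D0 _ => //; apply/decomp => D.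
rewrite minSTD_minset => /minsetP [STD_D _] nDD0.
apply: XU_var_ideal; rewrite disjoint_sym -subsets_disjoint.
by apply: contra nDD0 => sDD0; rewrite (minD0 D STD_D sDD0).
Qed.
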